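(* Let $A$ be a deterministic KAT automaton over $(\Sigma,T_0)$ and $\mathfrak{t}:T_0\to\mathsf{BA}(T_1)$. If $\mathsf{compose}_{\mathfrak{t}}(A)$ is $k$-dense, then so is $A$.
   Context: Atoms $\mathsf{At}_T=2^T$; $\mathsf{BA}(T)$ Boolean expressions over $T$; $\beta\le b$ means $b$ holds under the assignment making exactly the tests in $\beta$ true. Deterministic KAT automaton over $(\Sigma,T)$: $A=(Q,\delta,\iota)$, $Q$ finite, $\delta:Q\times\mathsf{At}_T\to\{\mathsf{accept},\mathsf{reject}\}+\Sigma\times Q$, $\iota:\mathsf{At}_T\to\{\mathsf{accept},\mathsf{reject}\}+\Sigma\times Q$. Write $q\xrightarrow{\alpha\mid p}_Aq'$ for $\delta(q,\alpha)=(p,q')$; $q$ accepts $\alpha$ if $\delta(q,\alpha)=\mathsf{accept}$. $\mathsf{compose}_{\mathfrak{t}}(A)$: for $\beta\in\mathsf{At}_{T_1}$ let $\mathfrak{t}^{-1}(\beta)\in\mathsf{At}_{T_0}$ be the atom with $t\in\mathfrak{t}^{-1}(\beta)$ iff $\beta\le\mathfrak{t}(t)$; $\mathsf{compose}_{\mathfrak{t}}(A)=(Q,\delta',\iota')$ over $(\Sigma,T_1)$ with $\delta'(q,\beta)=\delta(q,\mathfrak{t}^{-1}(\beta))$, $\iota'(\beta)=\iota(\mathfrak{t}^{-1}(\beta))$. An automaton $(Q,\delta,\iota)$ over $(\Sigma,T)$ is $k$-dense if there exist non-empty subsets $S_1,\dots,S_k\subseteq Q$, distinct atoms $\alpha_1,\dots,\alpha_k\in\mathsf{At}_T$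 and, for all $1\le i,j\le k$ and $q\in S_i$, an action $p_{qj}\in\Sigma$, such that for all $i,j,m\le k$: (1) if $q\in S_i$ then $q$ accepts $\alpha_i$; (2) if $i\ne j$ and $q\in S_i$, there is $q'\in S_j$ with $q\xrightarrow{\alpha_j\mid p_{qj}}q'$; (3) if $q\in S_i$ and $q'\in S_j$ with $p_{qm}=p_{q'm}$, then $i=j$. *)

From mathcomp Require Import all_boot.
Set Implicit Arguments. Unset Strict Implicit. Unset Printing Implicit Defensive.

Inductive BA (T : Type) : Type :=
| BFalse | BTrue | BTest of T
| BAnd of BA T & BA T | BOr of BA T & BA T | BNot of BA T.

(* Atoms At_T = 2^T, represented as the set of tests that are true. *)
Definition atom (T : finType) := {set T}.

Fixpoint ba_sat (T : finType) (beta : atom T) (b : BA T) : bool :=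
  match b with
  | BFalse => false
  | BTrue => true
  | BTest t => t \in beta
  | BAnd b1 b2 => ba_sat beta b1 && ba_sat beta b2
  | BOr b1 b2 => ba_sat beta b1 || ba_sat beta b2
  | BNot b1 => ~~ ba_sat beta b1
  end.

Inductive res (Sigma Q : Type) : Type :=
| Accept | Reject | Step of Sigma & Q.
Arguments Accept {Sigma Q}. Arguments Reject {Sigma Q}.

Record kat_aut (Sigma : Type) (T : finType) (Q : finType) := KatAut {
  delta : Q -> atom T -> res Sigma Q;
  iota : atom T -> res Sigma Q
}.

Definition tinv (T0 T1 : finType) (t : T0 -> BA T1) (beta : atom T1) : atom T0 :=
  [set x | ba_sat beta (t x)].

Definition compose (Sigma : Type) (T0 T1 Q : finType) (t : T0 -> BA T1)
  (A : kat_aut Sigma T0 Q) : kat_aut Sigma T1 Q :=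
  KatAut (fun q beta => delta A q (tinv t beta)) (fun beta => iota A (tinv t beta)).

Definition k_dense (Sigma : Type) (T Q : finType) (A : kat_aut Sigma T Q) (k : nat) : Prop :=
  exists (S : 'I_k -> {set Q}) (alpha : 'I_k -> atom T) (p : Q -> 'I_k -> Sigma),
    (forall i, S i != set0) /\
    injective alpha /\
    (forall i q, q \in S i -> delta A q (alpha i) = Accept) /\
    (forall i j q, i != j -> q \in S i ->
       exists2 q', q' \in S j & delta A q (alpha j) = Step (p q j) q') /\
    (forall i j m q q', q \in S i -> q' \in S j -> p q m = p q' m -> i = j).

From Pilot Require Import Defs.
From mathcomp Require Import all_boot.
Set Implicit Arguments. Unset Strict Implicit.

(* The sets S_i and actions p witnessing density of compose_t(A) also witness
   density of A, with atoms t^-1(alpha_i): compose only relabels atoms, so every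
   condition transfers verbatim.  The relabelled atoms stay distinct because a
   state of S_i accepts t^-1(alpha_i) but takes a step on t^-1(alpha_j). *)

Definition relabel_atoms (Sigma : Type) (T0 T1 Q : finType)
  (f : atom T1 -> atom T0) (A : kat_aut Sigma T0 Q) : kat_aut Sigma T1 Q :=
  KatAut (fun q beta => delta A q (f beta)) (fun beta => Defs.iota A (f beta)).

Lemma compose_relabel (Sigma : Type) (T0 T1 Q : finType) (t : T0 -> BA T1)
  (A : kat_aut Sigma T0 Q) : compose t A = relabel_atoms (tinv t) A.
Proof. by []. Qed.

Lemma accept_step_neq (Sigma : Type) (T Q : finType) (A : kat_aut Sigma T Q)
  (q q' : Q) (a b : atom T) (s : Sigma) :
  delta A q a = Accept -> delta A q b = Step s q' -> a != b.
Proof. by move=> acc step; apply/eqP=> eq_ab; rewrite eq_ab step in acc. Qed.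

Lemma k_dense_relabel (Sigma : Type) (T0 T1 Q : finType)
  (f : atom T1 -> atom T0) (A : kat_aut Sigma T0 Q) (k : nat) :
  k_dense (relabel_atoms f A) k -> k_dense A k.
Proof.
move=> [S [alpha [p [S_neq0 [_ [acc [step sep]]]]]]].
exists S, (f \o alpha), p; split=> //; split=> //.
move=> i j /= eq_ij; apply/eqP; apply: contraT => neq_ij.
have /set0Pn [q q_Si] := S_neq0 i.
have [q' _ step_j] := step i j q neq_ij q_Si.
by have := accept_step_neq (A := A) (acc i q q_Si) step_j; rewrite eq_ij eqxx.
Qed.

Theorem lemma6p19 (Sigma : Type) (T0 T1 Q : finType) (A : kat_aut Sigma T0 Q)
  (t : T0 -> BA T1) (k : nat) :
  k_dense (compose t A) k -> k_dense A k.
Proof. by rewrite compose_relabel; apply: k_dense_relabel. Qed.
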